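(* Let $d\ge1$ and let $G_1=(V_1,E_1)$ and $G_2=(V_2,E_2)$ be two graphs with $G_1\cap G_2\cong K_2$ and $E_1\cap E_2=\{e\}$, such that $e$ is not a coloop in either $\mathcal{R}_d(G_1)$ or $\mathcal{R}_d(G_2)$. If $G$ is the graphical parallel connection of $G_1$ and $G_2$ along $e$, then $\mathcal{R}_d(G)=P(\mathcal{R}_d(G_1),\mathcal{R}_d(G_2))$. Moreover, if $G'$ is the graphical 2-sum of $G_1$ and $G_2$ along $e$, then $\mathcal{R}_d(G')=\mathcal{R}_d(G_1)\oplus_2\mathcal{R}_d(G_2)$.
   Context: For a graph $G=(V,E)$ and a generic $p:V\to\mathbb{R}^d$ (coordinates algebraically independent over $\mathbb{Q}$), the rigidity matrix $R(G,p)$ has a row for each $uv\in E$ with $p(u)-p(v)$ in the $d$ columns of $u$, $p(v)-p(u)$ in those of $v$, zeros elsewhere. $\mathcal{R}_d(G)$ is its row matroid on $E$. A coloop of a matroid is an element contained in no circuit. Graphical operations: for graphs $G_1,G_2$ with $G_1\cap G_2\cong K_2$ and $E_1\cap E_2=\{e\}$, the graphical parallel connection along $e$ is $G_1\cup G_2$ and the graphical 2-sum along $e$ is $(G_1\cup G_2)-e$. Matroid operations: for matroids $\mathcal{M}_1,\mathcal{M}_2$ on $E_1,E_2$ with $E_1\cap E_2=\{e\}$, $e$ neither a loop nor a coloop of either, the parallel connection $P(\mathcal{M}_1,\mathcal{M}_2)$ is the matroid on $E_1\cup E_2$ whose circuits are the circuits of $\mathcal{M}_1$, the circuits of $\mathcal{M}_2$,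 and the sets $(C_1\cup C_2)-e$ where $C_i$ is a circuit of $\mathcal{M}_i$ containing $e$ for $i=1,2$. The 2-sum $\mathcal{M}_1\oplus_2\mathcal{M}_2$ is the matroid on $(E_1\cup E_2)-e$ whose circuits are the circuits of $\mathcal{M}_1$ or $\mathcal{M}_2$ not containing $e$, together with the sets $(C_1\cup C_2)-e$ where $C_i$ is a circuit of $\mathcal{M}_i$ containing $e$ for $i=1,2$. *)

From HB Require Import structures.
From mathcomp Require Import all_boot all_order all_algebra.
From mathcomp Require Import reals.
From mathcomp Require Import mpoly.

Set Implicit Arguments.
Unset Strict Implicit.
Unset Printing Implicit Defensive.

Import Order.TTheory GRing.Theory Num.Theory.
Local Open Scope ring_scope.

Definition is_graph (T : finType) (V : {set T}) (E : {set {set T}}) : Prop :=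
  forall f, f \in E -> (f \subset V) /\ #|f| = 2%N.

(* p : T -> R^d (coordinates p w k) is generic on V: any finite family of
   pairwise distinct coordinates of vertices of V is algebraically
   independent over Q. *)
Definition generic_on (R : realType) (T : finType) (d : nat) (V : {set T})
    (p : T -> 'I_d -> R) : Prop :=
  forall (n : nat) (c : 'I_n -> T * 'I_d),
    injective c -> (forall k, (c k).1 \in V) ->
    forall q : {mpoly rat[n]}, q != 0 ->
      (map_mpoly (ratr : rat -> R) q).@[fun k => p (c k).1 (c k).2] != 0.

(* Row of the rigidity matrix R(G,p) for the edge f = {u,v}, entry in the
   column (w,k): p(u)_k - p(v)_k if w = u, p(v)_k - p(u)_k if w = v, 0 else. *)
Definition rig_row (R : realType) (T : finType) (d : nat) (p : T -> 'I_d -> R)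
    (f : {set T}) (w : T) (k : 'I_d) : R :=
  if w \in f then \sum_(x in f) (p w k - p x k) else 0.

Definition rig_dependent (R : realType) (T : finType) (d : nat)
    (p : T -> 'I_d -> R) (F : {set {set T}}) : Prop :=
  exists c : {set T} -> R,
    (exists2 f, f \in F & c f != 0) /\
    forall w k, \sum_(f in F) c f * rig_row p f w k = 0.

Definition rig_circuit (R : realType) (T : finType) (d : nat)
    (p : T -> 'I_d -> R) (E : {set {set T}}) (C : {set {set T}}) : Prop :=
  C \subset E /\ rig_dependent p C /\
  forall C' : {set {set T}}, C' \proper C -> ~ rig_dependent p C'.

Definition is_coloop (A : finType) (M : {set A} -> Prop) (e : A) : Prop :=
  ~ exists2 C, M C & e \in C.

Definition parallel_connection_circuits (A : finType)
    (M1 M2 : {set A} -> Prop) (e : A) (C : {set A}) : Prop :=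
  M1 C \/ M2 C \/
  exists C1 C2, [/\ M1 C1, e \in C1, M2 C2, e \in C2 & C = (C1 :|: C2) :\ e].

Definition two_sum_circuits (A : finType)
    (M1 M2 : {set A} -> Prop) (e : A) (C : {set A}) : Prop :=
  ((M1 C \/ M2 C) /\ e \notin C) \/
  exists C1 C2, [/\ M1 C1, e \in C1, M2 C2, e \in C2 & C = (C1 :|: C2) :\ e].

(* The row spaces of R(G1,p) and R(G2,p) meet exactly in the line spanned by
   the row of e = uv.  A vector w in both spans is a load carried only by the
   shared vertices u and v and orthogonal to every infinitesimal isometry of p:
   translations give w_v = - w_u, and the rotation in the plane of w_u and
   p(u) - p(v) forces equality in Cauchy-Schwarz, so w_u is parallel to
   p(u) - p(v).  Genericity is only used to get p(u) <> p(v).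
   For two families of vectors whose spans meet in the line of a common
   nonzero vector e, every dependency on their union splits into dependencies on
   the two sides that cancel along e; minimality of circuits then identifies
   the circuits of the union with those of the parallel connection, and the
   circuits avoiding e with those of the 2-sum. *)

From HB Require Import structures.
From mathcomp Require Import all_boot all_order all_algebra.
From mathcomp Require Import reals.
From mathcomp Require Import mpoly ring.
From Stdlib Require Import PropExtensionality FunctionalExtensionality.

Set Implicit Arguments.
Unset Strict Implicit.
Unset Printing Implicit Defensive.

Import GRing.Theory Num.Theory.
Local Open Scope ring_scope.

Lemma setU1I_subset (T : finType) (e : T) (C C1 C2 E1 E2 : {set T}) :
  E1 :&: E2 \subset [set e] -> C2 \subset E2 -> e \in C1 ->
  C \subset (C1 :|: C2) :\ e -> e |: (C :&: E1) \subset C1.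
Proof.
move=> sE12 sC2 eC1 sC; rewrite subUset sub1set eC1; apply/subsetP => f /setIP [fC fE1].
move: (subsetP sC f fC); rewrite !inE => /andP [fe /orP [// | fC2]].
by move: (subsetP sE12 f); rewrite !inE fE1 (subsetP sC2) // (negbTE fe) => /implyP.
Qed.

Lemma setU1I_setD1 (T : finType) (e : T) (C E1 E2 : {set T}) :
  e \notin C -> C \subset E1 :|: E2 ->
  ((e |: (C :&: E1)) :|: (e |: (C :&: E2))) :\ e = C.
Proof.
move=> eC sC; apply/setP => f; rewrite !inE.
case: (eqVneq f e) => [->|fe] /=; first exact/esym/negbTE.
rewrite -andb_orr; case fC: (f \in C) => //=.
by move: (subsetP sC f fC); rewrite inE.
Qed.

Section RowMatroid.
Variables (R : fieldType) (A : finType) (X : Type) (r : A -> X -> R).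
Implicit Types (C D E F G S : {set A}) (c g : A -> R) (f : A).

Definition lincomb (c : A -> R) (x : X) : R := \sum_f c f * r f x.

Definition supported (F : {set A}) (c : A -> R) : Prop :=
  forall f, f \notin F -> c f = 0.

Definition dependency (F : {set A}) (c : A -> R) : Prop :=
  supported F c /\ forall x, lincomb c x = 0.

Definition dependent (F : {set A}) : Prop :=
  exists2 c, dependency F c & exists f, c f != 0.

Definition min_dependent (C : {set A}) : Prop :=
  dependent C /\ forall C' : {set A}, C' \proper C -> ~ dependent C'.

Definition circuit (E C : {set A}) : Prop := C \subset E /\ min_dependent C.

Lemma lincombB c1 c2 x :
  lincomb (fun f => c1 f - c2 f) x = lincomb c1 x - lincomb c2 x.
Proof. by rewrite /lincomb -sumrB; apply: eq_bigr => f _; rewrite mulrBl. Qed.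

Lemma lincombZ a c x : lincomb (fun f => a * c f) x = a * lincomb c x.
Proof. by rewrite /lincomb mulr_sumr; apply: eq_bigr => f _; rewrite mulrA. Qed.

Lemma lincomb_delta (e : A) l x :
  lincomb (fun f => if f == e then l else 0) x = l * r e x.
Proof.
by rewrite /lincomb (bigD1 e) //= eqxx big1 ?addr0 // => f /negbTE ->; rewrite mul0r.
Qed.

Lemma supported_mem F c f : supported F c -> c f != 0 -> f \in F.
Proof. by move=> sc; apply: contraR => /sc ->; rewrite eqxx. Qed.

Lemma supportedS F G c : F \subset G -> supported F c -> supported G c.
Proof. by move=> sFG sc f fG; apply: sc; apply: contra fG; apply: subsetP. Qed.

Lemma dependency_setU1 S c (e : A) :
  dependency (e |: S) c -> c e = 0 -> dependency S c.
Proof.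
move=> [sc lc] ce; split=> // f fS; case: (eqVneq f e) => [-> //|fe].
by apply: sc; rewrite in_setU1 negb_or fe.
Qed.

Lemma min_dependent_zero_or_full C c : min_dependent C -> dependency C c ->
  (forall f, c f = 0) \/ {in C, forall f, c f != 0}.
Proof.
move=> [_ minC] [sc lc].
case: (boolP [exists f, c f != 0]) => [/existsP [f0 cf0]|/existsPn c0]; last first.
  by left=> f; apply/eqP/negbNE/c0.
right=> f fC; apply/negP => /eqP cf.
apply: (minC (C :\ f)); first exact: properD1.
exists c; last by exists f0.
split=> // g; rewrite in_setD1 negb_and negbK => /orP [/eqP -> //|]; exact: sc.
Qed.

Lemma min_dependent_full C : min_dependent C ->
  exists2 c, dependency C c & {in C, forall f, c f != 0}.
Proof.
move=> minC; have [[c dc [f cf]] _] := minC.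
exists c => //; case: (min_dependent_zero_or_full minC dc) => // c0.
by rewrite c0 eqxx in cf.
Qed.

Lemma dependent_setD1 F g D x : dependency F g -> {in F, forall f, g f != 0} ->
  D \proper F -> dependent D -> x \in F -> dependent (F :\ x).
Proof.
move=> [sg lg] gF ltDF [h [sh lh] [f0 hf0]] xF.
have shF := supportedS (proper_sub ltDF) sh.
have [hx0|hxN0] := eqVneq (h x) 0.
  exists h; last by exists f0.
  split=> // f; rewrite in_setD1 negb_and negbK => /orP [/eqP -> //|]; exact: shF.
have [_ [z zF zD]] := properP ltDF.
exists (fun f => g f - g x / h x * h f); last first.
  by exists z; rewrite (sh z zD) mulr0 subr0 gF.
split; last by move=> y; rewrite lincombB lincombZ lg lh mulr0 subrr.
move=> f; rewrite in_setD1 negb_and negbK => /orP [/eqP ->|fF].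
  by rewrite divfK // subrr.
by rewrite (sg f) // (shF f) // mulr0 subrr.
Qed.

Lemma min_dependent_of_full F g x : dependency F g -> {in F, forall f, g f != 0} ->
  x \in F -> ~ dependent (F :\ x) -> min_dependent F.
Proof.
move=> dg gF xF indep; split; first by exists g => //; exists x; exact: gF.
by move=> D ltDF dD; exact/indep/(dependent_setD1 dg gF ltDF dD xF).
Qed.

Lemma min_dependent_setU1 C S c g (e : A) : min_dependent C ->
  {in C, forall f, c f != 0} -> S \proper C -> e \notin C ->
  dependency (e |: S) g -> g e != 0 -> {in S, g =1 c} -> min_dependent (e |: S).
Proof.
move=> [_ minC] cC ltSC eC dg ge gS; have sSC := proper_sub ltSC.
apply: (min_dependent_of_full dg _ (setU11 e S)).
  move=> f /setU1P [-> //|fS]; rewrite gS //; exact/cC/(subsetP sSC).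
by rewrite setU1K ?(contra (subsetP sSC e)) //; exact: minC.
Qed.

Lemma circuitS E F C : E \subset F -> circuit E C -> circuit F C.
Proof. by move=> sEF [sCE mC]; split=> //; exact: subset_trans sEF. Qed.

Lemma circuit_setD1 E x C : circuit (E :\ x) C <-> circuit E C /\ x \notin C.
Proof.
split=> [[sC mC]|[[sC mC] xC]].
  split; first by split=> //; exact: subset_trans sC (subsetDl _ _).
  by apply/negP => /(subsetP sC); rewrite setD11.
split=> //; apply/subsetP => f fC; rewrite in_setD1 (subsetP sC) // andbT.
by apply: contraNneq xC => <-.
Qed.

Section TwoSpans.
Variables (E1 E2 : {set A}) (e : A).
Hypothesis E1IE2 : E1 :&: E2 = [set e].
Hypothesis r_e_neq0 : exists x, r e x != 0.
Hypothesis span_cap : forall c1 c2, supported E1 c1 -> supported E2 c2 ->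
  (forall x, lincomb c1 x = lincomb c2 x) ->
  exists l, forall x, lincomb c1 x = l * r e x.

Lemma e_in_E1 : e \in E1.
Proof. by have := set11 e; rewrite -E1IE2 inE => /andP []. Qed.

Lemma e_in_E2 : e \in E2.
Proof. by have := set11 e; rewrite -E1IE2 inE => /andP []. Qed.

Lemma E1_notin_E2 f : f \in E1 -> f != e -> f \notin E2.
Proof. by move=> fE1; apply: contra => fE2; rewrite -in_set1 -E1IE2 inE fE1. Qed.

Lemma E2_notin_E1 f : f \in E2 -> f != e -> f \notin E1.
Proof. by move=> fE2; apply: contra => fE1; rewrite -in_set1 -E1IE2 inE fE1. Qed.

Lemma set1_independent : ~ dependent [set e].
Proof.
move=> [c [sc lc] [f cf]]; have [x rx] := r_e_neq0.
have fe : f = e by apply/set1P; exact: supported_mem sc cf.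
have : lincomb c x = c e * r e x.
  rewrite -lincomb_delta; apply: eq_bigr => g _; congr (_ * _).
  by case: eqVneq => [-> //|ge]; apply: sc; rewrite inE.
rewrite lc => /esym/eqP; rewrite mulf_eq0 (negbTE rx) orbF -fe.
by rewrite (negbTE cf).
Qed.

Lemma min_dependent_other C : min_dependent C -> e \in C ->
  exists2 f, f \in C & f != e.
Proof.
move=> [dC _] eC; case: (boolP (C \subset [set e])) => [sCe|/subsetPn [f fC]].
  have CE : C = [set e] by apply/eqP; rewrite eqEsubset sCe sub1set.
  by case: set1_independent; rewrite -CE.
by rewrite inE; exists f.
Qed.

Lemma dependency_split F c : F \subset E1 :|: E2 -> dependency F c ->
  exists c1 c2, [/\ dependency (e |: (F :&: E1)) c1,
    dependency (e |: (F :&: E2)) c2, forall f, c f = c1 f + c2 f,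
    {in E1 :\ e, c1 =1 c} & {in E2 :\ e, c2 =1 c}].
Proof.
move=> sF [sc lc].
pose a f := if (f \in E1) && (f != e) then c f else 0.
have [l al] : exists l, forall x, lincomb a x = l * r e x.
  apply: (span_cap (c2 := fun f => a f - c f)).
  - by move=> f fE1; rewrite /a (negbTE fE1).
  - move=> f fE2; rewrite /a; case: ifP => [_|fE1e]; first by rewrite subrr.
    rewrite sc ?subrr //; apply: contraFN fE1e => fF.
    have fE1 : f \in E1 by move: (subsetP sF f fF); rewrite inE (negbTE fE2) orbF.
    by rewrite fE1; apply: contraNneq fE2 => ->; exact: e_in_E2.
  - by move=> x; rewrite lincombB lc subr0.
pose c1 f := a f - (if f == e then l else 0).
have lc1 x : lincomb c1 x = 0 by rewrite lincombB lincomb_delta al subrr.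
exists c1, (fun f => c f - c1 f); split.
- split=> // f; rewrite !inE negb_or => /andP [fe fFE1].
  rewrite /c1 /a (negbTE fe) andbT subr0; case: ifP fFE1 => // fE1.
  by rewrite andbT => /sc.
- split=> [f|x]; last by rewrite lincombB lc lc1 subrr.
  rewrite !inE negb_or => /andP [fe fFE2]; rewrite /c1 /a (negbTE fe) andbT subr0.
  case: (boolP (f \in F)) => fF; last by rewrite (sc f fF) if_same subrr.
  have fE1 : f \in E1.
    by move: (subsetP sF f fF) fFE2; rewrite fF inE /= => /orP [| ->].
  by rewrite fE1 subrr.
- by move=> f; rewrite addrC subrK.
- by move=> f /setD1P [fe fE1]; rewrite /c1 /a fE1 (negbTE fe) /= subr0.
- move=> f /setD1P [fe fE2]; rewrite /c1 /a (negbTE fe) (negbTE (E2_notin_E1 fE2 fe)).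
  by rewrite !subr0.
Qed.

Lemma dependent_glue C1 C2 : circuit E1 C1 -> e \in C1 ->
  circuit E2 C2 -> e \in C2 -> dependent ((C1 :|: C2) :\ e).
Proof.
move=> [sC1 mC1] eC1 [sC2 mC2] eC2.
have [c1 [s1 l1] c1C1] := min_dependent_full mC1.
have [c2 [s2 l2] c2C2] := min_dependent_full mC2.
have [f1 f1C1 f1e] := min_dependent_other mC1 eC1.
have f1C2 : f1 \notin C2.
  exact: contra (subsetP sC2 f1) (E1_notin_E2 (subsetP sC1 f1 f1C1) f1e).
exists (fun f => (c1 e)^-1 * c1 f - (c2 e)^-1 * c2 f); last first.
  by exists f1; rewrite (s2 f1 f1C2) mulr0 subr0 mulf_neq0 ?invr_eq0 ?c1C1.
split; last by move=> x; rewrite lincombB !lincombZ l1 l2 !mulr0 subrr.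
move=> f; rewrite !inE negb_and negbK negb_or => /orP [/eqP ->|/andP [fC1 fC2]].
  by rewrite !mulVf ?c1C1 ?c2C2 ?subrr.
by rewrite (s1 f) // (s2 f) // !mulr0 subrr.
Qed.

Lemma glue_minimal C1 C2 C : circuit E1 C1 -> e \in C1 ->
  circuit E2 C2 -> e \in C2 -> C \proper (C1 :|: C2) :\ e -> ~ dependent C.
Proof.
move=> [sC1 mC1] eC1 [sC2 mC2] eC2 ltC [h dh [f0 hf0]]; have sC := proper_sub ltC.
have sCE : C \subset E1 :|: E2.
  exact: subset_trans sC (subset_trans (subsetDl _ _) (setUSS sC1 sC2)).
have [h1 [h2 [[t1 m1] [t2 m2] hE h1E h2E]]] := dependency_split sCE dh.
have sC1' : e |: (C :&: E1) \subset C1.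
  by apply: setU1I_subset sC2 eC1 sC; rewrite E1IE2.
have sC2' : e |: (C :&: E2) \subset C2.
  by apply: setU1I_subset sC1 eC2 _; [rewrite setIC E1IE2 | rewrite setUC].
have d1 : dependency C1 h1 := conj (supportedS sC1' t1) m1.
have d2 : dependency C2 h2 := conj (supportedS sC2' t2) m2.
have eC : e \notin C by apply/negP => /(subsetP sC); rewrite setD11.
have h12 : h1 e = - h2 e by apply/eqP; rewrite -addr_eq0 -hE (dh.1 e eC).
have [h1_0|h1C1] := min_dependent_zero_or_full mC1 d1.
  have [h2_0|h2C2] := min_dependent_zero_or_full mC2 d2.
    by move: hf0; rewrite hE h1_0 h2_0 addr0 eqxx.
  by move: (h2C2 e eC2); rewrite -oppr_eq0 -h12 h1_0 eqxx.
have h2C2 : {in C2, forall f, h2 f != 0}.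
  case: (min_dependent_zero_or_full mC2 d2) => // h2_0.
  by move: (h1C1 e eC1); rewrite h12 h2_0 oppr0 eqxx.
move/properP: ltC => [_ [f fU]]; apply/negP/negPn; apply: (supported_mem dh.1).
move: fU; rewrite !inE => /andP [fe /orP [fC1|fC2]].
  by rewrite -h1E ?h1C1 // !inE fe (subsetP sC1).
by rewrite -h2E ?h2C2 // !inE fe (subsetP sC2).
Qed.

Lemma circuit_glue C1 C2 : circuit E1 C1 -> e \in C1 ->
  circuit E2 C2 -> e \in C2 -> circuit (E1 :|: E2) ((C1 :|: C2) :\ e).
Proof.
move=> cC1 eC1 cC2 eC2; split.
  exact: subset_trans (subsetDl _ _) (setUSS cC1.1 cC2.1).
by split=> [|C]; [exact: dependent_glue | exact: glue_minimal].
Qed.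

Lemma circuit_split C : circuit (E1 :|: E2) C ->
  ~~ (C \subset E1) -> ~~ (C \subset E2) ->
  exists C1 C2, [/\ circuit E1 C1, e \in C1, circuit E2 C2, e \in C2
                   & C = (C1 :|: C2) :\ e].
Proof.
move=> [sC mC] /subsetPn [f2 f2C f2E1] /subsetPn [f1 f1C f1E2].
have [c dc cC] := min_dependent_full mC.
have [c1 [c2 [d1 d2 cE c1E c2E]]] := dependency_split sC dc.
have f1E1 : f1 \in E1 by move: (subsetP sC f1 f1C); rewrite inE (negbTE f1E2) orbF.
have f1e : f1 != e by apply: contraNneq f1E2 => ->; exact: e_in_E2.
have c1f1 : c1 f1 != 0 by rewrite c1E ?cC // !inE f1e.
have ltC1 : C :&: E1 \proper C.
  apply/properP; split; first exact: subsetIl.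
  by exists f2; rewrite // inE (negbTE f2E1) andbF.
have ltC2 : C :&: E2 \proper C.
  apply/properP; split; first exact: subsetIl.
  by exists f1; rewrite // inE (negbTE f1E2) andbF.
have indep1 : ~ dependent (C :&: E1) := mC.2 _ ltC1.
have eC : e \notin C.
  apply/negP => eC; apply: indep1; exists c1; last by exists f1.
  suff <- : e |: (C :&: E1) = C :&: E1 by [].
  by apply/setUidPr; rewrite sub1set inE eC e_in_E1.
have c2e : c2 e = - c1 e.
  by apply/eqP; rewrite -addr_eq0 addrC -cE (dc.1 e eC).
have c1e : c1 e != 0.
  apply/negP => /eqP c1e; apply: indep1; exists c1; last by exists f1.
  exact: dependency_setU1 d1 c1e.
have inC f : f \in C -> f != e by apply: contraTneq => ->.
exists (e |: (C :&: E1)), (e |: (C :&: E2)); split; rewrite ?setU11 //.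
- split; first by rewrite subUset sub1set e_in_E1 subsetIr.
  apply: (min_dependent_setU1 mC cC ltC1 eC d1 c1e) => f /setIP [fC fE1].
  by apply: c1E; rewrite !inE fE1 inC.
- split; first by rewrite subUset sub1set e_in_E2 subsetIr.
  apply: (min_dependent_setU1 mC cC ltC2 eC d2); first by rewrite c2e oppr_eq0.
  by move=> f /setIP [fC fE2]; apply: c2E; rewrite !inE fE2 inC.
by rewrite setU1I_setD1.
Qed.

Lemma circuit_parallel C : circuit (E1 :|: E2) C <->
  parallel_connection_circuits (circuit E1) (circuit E2) e C.
Proof.
split=> [cC|].
  case: (boolP (C \subset E1)) => [sC1|nC1]; first by left; split=> //; exact: cC.2.
  case: (boolP (C \subset E2)) => [sC2|nC2]; first by right; left; split=> //; exact: cC.2.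
  by right; right; exact: circuit_split.
case=> [|[|[C1 [C2 [cC1 eC1 cC2 eC2 ->]]]]]; last exact: circuit_glue.
  exact/circuitS/subsetUl.
exact/circuitS/subsetUr.
Qed.

Lemma circuit_two_sum C : circuit ((E1 :|: E2) :\ e) C <->
  two_sum_circuits (circuit E1) (circuit E2) e C.
Proof.
split=> [/circuit_setD1 [/circuit_parallel cC eC]|].
  by case: cC => [c1|[c2|glued]]; [left; split; [left|] | left; split; [right|] | right].
case=> [[c12 eC]|glued]; apply/circuit_setD1; split=> //.
- by apply/circuit_parallel; case: c12 => [c1|c2]; [left | right; left].
- by apply/circuit_parallel; right; right.
by case: glued => [C1 [C2 [_ _ _ _ ->]]]; rewrite !inE eqxx.
Qed.

End TwoSpans.

End RowMatroid.

Section DotProduct.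
Variables (R : realFieldType) (d : nat).
Implicit Types a b c : 'I_d -> R.

Definition dot a b : R := \sum_k a k * b k.

Lemma dotC a b : dot a b = dot b a.
Proof. by apply: eq_bigr => k _; rewrite mulrC. Qed.

Lemma eq_dotr a b c : b =1 c -> dot a b = dot a c.
Proof. by move=> bc; apply: eq_bigr => k _; rewrite bc. Qed.

Lemma dotBr a b c : dot a (fun k => b k - c k) = dot a b - dot a c.
Proof. by rewrite /dot -sumrB; apply: eq_bigr => k _; rewrite mulrBr. Qed.

Lemma dot_combr a b c s t :
  dot a (fun k => s * b k - t * c k) = s * dot a b - t * dot a c.
Proof.
by rewrite /dot !mulr_sumr -sumrB; apply: eq_bigr => k _; ring.
Qed.

Lemma dot_self_eq0 a : dot a a = 0 -> forall k, a k = 0.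
Proof.
move=> aa0 k; apply/eqP; rewrite -sqrf_eq0 expr2; apply/eqP.
by apply: (psumr_eq0P _ aa0) => // i _; rewrite -expr2 sqr_ge0.
Qed.

Lemma dot_parallel a b : dot a b ^+ 2 = dot a a * dot b b ->
  forall k, dot b b * a k = dot a b * b k.
Proof.
move=> cs k; apply/eqP; rewrite -subr_eq0; apply/eqP; move: k.
apply: dot_self_eq0; set P := dot a b; set B := dot b b.
rewrite dot_combr [dot _ a]dotC [dot _ b]dotC !dot_combr [dot b a]dotC -/P -/B.
have -> : B * (B * dot a a - P * P) - P * (B * P - P * B) =
          B * (B * dot a a - P ^+ 2) by ring.
by rewrite cs -/B [B * dot a a]mulrC subrr mulr0.
Qed.
End DotProduct.

Section Rigidity.
Variables (R : realType) (T : finType) (d : nat) (p : T -> 'I_d -> R).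
Implicit Types (f : {set T}) (u v x : T) (k : 'I_d) (c : {set T} -> R).

Definition rig_vec (f : {set T}) (x : T * 'I_d) : R := rig_row p f x.1 x.2.

Lemma rig_row_notin f x k : x \notin f -> rig_row p f x k = 0.
Proof. by rewrite /rig_row => /negbTE ->. Qed.

Lemma rig_row_edge u v k : u != v -> rig_row p [set u; v] u k = p u k - p v k.
Proof.
by move=> uv; rewrite /rig_row setU11 big_setU1 ?inE //= big_set1 subrr add0r.
Qed.

Lemma rig_row_edge_r u v k : u != v -> rig_row p [set u; v] v k = p v k - p u k.
Proof. by move=> uv; rewrite setUC rig_row_edge // eq_sym. Qed.

Definition inf_isometry (m : T -> 'I_d -> R) : Prop :=
  forall a b, dot (fun k => p a k - p b k) (fun k => m a k - m b k) = 0.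

Lemma translation_inf_isometry j : inf_isometry (fun _ k => (k == j)%:R).
Proof. by move=> a b; apply: big1 => k _; rewrite subrr mulr0. Qed.

Definition rotation (al be : 'I_d -> R) (x : T) (k : 'I_d) : R :=
  dot al (p x) * be k - dot be (p x) * al k.

Lemma rotation_diff al be a b k :
  rotation al be a k - rotation al be b k =
  dot al (fun k => p a k - p b k) * be k - dot be (fun k => p a k - p b k) * al k.
Proof. by rewrite /rotation !dotBr; ring. Qed.

Lemma rotation_inf_isometry al be : inf_isometry (rotation al be).
Proof.
move=> a b; rewrite (eq_dotr _ (rotation_diff al be a b)).
by rewrite dot_combr [dot _ be]dotC [dot _ al]dotC mulrC subrr.
Qed.

Definition pairing (w : T * 'I_d -> R) (m : T -> 'I_d -> R) : R :=
  \sum_x \sum_k w (x, k) * m x k.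

Lemma pairing_two_points u v w m : u != v ->
  (forall x k, x \notin [set u; v] -> w (x, k) = 0) ->
  pairing w m = \sum_k (w (u, k) * m u k + w (v, k) * m v k).
Proof.
move=> uv w0; rewrite /pairing (bigD1 u) // (bigD1 v) 1?eq_sym //= big_split /=.
rewrite [X in _ + (_ + X)]big1 ?addr0 ?addrA // => x /andP [xu xv].
by apply: big1 => k _; rewrite w0 ?mul0r // !inE negb_or xu xv.
Qed.

Lemma pairing_rig_vec u v m : u != v -> inf_isometry m ->
  pairing (rig_vec [set u; v]) m = 0.
Proof.
move=> uv im; rewrite (pairing_two_points _ uv) => [|x k xuv]; last exact: rig_row_notin.
rewrite -[RHS](im u v); apply: eq_bigr => k _.
by rewrite /rig_vec /= rig_row_edge // rig_row_edge_r //; ring.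
Qed.

Lemma pairing_lincomb c m :
  pairing (lincomb rig_vec c) m = \sum_f c f * pairing (rig_vec f) m.
Proof.
rewrite /pairing /lincomb.
under eq_bigr => x _ do under eq_bigr => k _ do rewrite mulr_suml.
under eq_bigr => x _ do rewrite exchange_big /=.
rewrite exchange_big; apply: eq_bigr => f _; rewrite mulr_sumr; apply: eq_bigr => x _.
by rewrite mulr_sumr; apply: eq_bigr => k _; rewrite mulrA.
Qed.

Lemma lincomb_rig_orthogonal V E c m : is_graph V E -> supported E c ->
  inf_isometry m -> pairing (lincomb rig_vec c) m = 0.
Proof.
move=> gE sc im; rewrite pairing_lincomb; apply: big1 => f _.
have [fE|/sc ->] := boolP (f \in E); last exact: mul0r.
have [_ /eqP/cards2P [u [v [uv ->]]]] := gE f fE.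
by rewrite pairing_rig_vec ?mulr0.
Qed.

Lemma lincomb_rig_notin V E c x k : is_graph V E -> supported E c ->
  x \notin V -> lincomb rig_vec c (x, k) = 0.
Proof.
move=> gE sc xV; apply: big1 => f _.
have [fE|/sc ->] := boolP (f \in E); last exact: mul0r.
rewrite /rig_vec rig_row_notin ?mulr0 //; apply: contra xV.
exact: subsetP (gE f fE).1 x.
Qed.

Lemma two_point_load u v k0 (w : T * 'I_d -> R) :
  p u k0 != p v k0 -> (forall x k, x \notin [set u; v] -> w (x, k) = 0) ->
  (forall m, inf_isometry m -> pairing w m = 0) ->
  exists l, forall y, w y = l * rig_vec [set u; v] y.
Proof.
move=> puv w0 wm; have uv : u != v by apply: contraNneq puv => ->.
have wuv m : inf_isometry m -> \sum_k (w (u, k) * m u k + w (v, k) * m v k) = 0.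
  by move=> im; rewrite -(pairing_two_points m uv w0) wm.
have wv k : w (v, k) = - w (u, k).
  have := wuv _ (translation_inf_isometry k).
  rewrite (bigD1 k) //= eqxx big1 => [|j /negbTE ->].
    by rewrite !mulr1 addr0 => /eqP; rewrite addrC addr_eq0 => /eqP.
  by rewrite !mulr0 addr0.
pose W k := w (u, k); pose D k := p u k - p v k.
have cs : dot W D ^+ 2 = dot W W * dot D D.
  have := wuv _ (rotation_inf_isometry W D).
  rewrite (eq_bigr (fun k => W k * (rotation W D u k - rotation W D v k))); last first.
    by move=> k _; rewrite wv /W; ring.
  rewrite -/(dot W _) (eq_dotr _ (rotation_diff W D u v)) -/D dot_combr => /eqP.
  by rewrite subr_eq0 => /eqP cs; rewrite expr2 cs mulrC.
have DD0 : dot D D != 0.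
  by apply: contra puv => /eqP /dot_self_eq0 /(_ k0) /eqP; rewrite subr_eq0.
have Wk k : w (u, k) = dot W D / dot D D * D k.
  by apply: (mulfI DD0); rewrite -/(W k) dot_parallel //; field.
exists (dot W D / dot D D) => -[y k]; rewrite /rig_vec /=.
have [->|yu] := eqVneq y u; first by rewrite rig_row_edge.
have [->|yv] := eqVneq y v; first by rewrite rig_row_edge_r // wv Wk /D; ring.
by rewrite rig_row_notin ?w0 ?mulr0 // !inE negb_or yu yv.
Qed.

Lemma rig_span_cap V1 V2 E1 E2 u v k0 : is_graph V1 E1 -> is_graph V2 E2 ->
  V1 :&: V2 = [set u; v] -> p u k0 != p v k0 ->
  forall c1 c2, supported E1 c1 -> supported E2 c2 ->
  (forall y, lincomb rig_vec c1 y = lincomb rig_vec c2 y) ->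
  exists l, forall y, lincomb rig_vec c1 y = l * rig_vec [set u; v] y.
Proof.
move=> g1 g2 V12 puv c1 c2 s1 s2 c12; apply: (two_point_load puv).
  move=> x k; rewrite -V12 inE negb_and => /orP [xV1|xV2].
    exact: lincomb_rig_notin g1 s1 xV1.
  by rewrite c12; exact: lincomb_rig_notin g2 s2 xV2.
by move=> m; exact: lincomb_rig_orthogonal g1 s1.
Qed.

End Rigidity.

Lemma generic_on_neq (R : realType) (T : finType) (d : nat) (p : T -> 'I_d -> R)
    (V : {set T}) u v k :
  generic_on V p -> u \in V -> v \in V -> u != v -> p u k != p v k.
Proof.
move=> gen uV vV uv.
pose c (i : 'I_2) := if i == ord0 then (u, k) else (v, k).
have c_inj : injective c.
  apply: (can_inj (g := fun y => if y.1 == u then ord0 else ord_max)).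
  by move=> [[|[|i]] ?] //; rewrite /c /= ?eqxx 1?eq_sym ?(negbTE uv); apply: val_inj.
have cV i : (c i).1 \in V by rewrite /c; case: ifP.
pose q : {mpoly rat[2]} := 'X_ord0 - 'X_(lift ord0 ord0).
have q_neq0 : q != 0.
  apply/eqP => /(congr1 (meval (fun i : 'I_2 => (i == ord0)%:R))).
  by rewrite mevalB !mevalXU meval0.
have := gen 2 c c_inj cV q q_neq0.
by rewrite raddfB /= /map_mpoly !mmapX !mmap1_id mevalB !mevalXU /c /= subr_eq0.
Qed.

Section RigidityMatroid.
Variables (R : realType) (T : finType) (d : nat) (p : T -> 'I_d -> R).

Lemma rig_dependentE (F : {set {set T}}) :
  rig_dependent p F <-> dependent (rig_vec p) F.
Proof.
split=> [[c [[f fF cf] lc]]|[c [sc lc] [f cf]]].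
  exists (fun f => if f \in F then c f else 0); last by exists f; rewrite fF.
  split=> [g /negbTE -> //|[x k]]; rewrite -[RHS](lc x k) [RHS]big_mkcond.
  by apply: eq_bigr => g _; case: ifP => _; rewrite ?mul0r.
exists c; split; first by exists f; rewrite ?(supported_mem sc cf).
move=> x k; rewrite -[RHS](lc (x, k)) [RHS](bigID (mem F)) /= [X in _ + X]big1 ?addr0 //.
by move=> g /sc ->; rewrite mul0r.
Qed.

Lemma rig_circuitE (E : {set {set T}}) : rig_circuit p E = circuit (rig_vec p) E.
Proof.
apply: functional_extensionality => C; apply: propositional_extensionality.
split=> [[sC [dC minC]]|[sC [dC minC]]]; do 2!split=> //.
- exact/rig_dependentE.
- by move=> C' ltC' /rig_dependentE; exact: minC.
- exact/rig_dependentE.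
- by move=> C' ltC' /rig_dependentE; exact: minC.
Qed.

End RigidityMatroid.

Theorem theorem3p3 (R : realType) (T : finType) (d : nat) (p : T -> 'I_d -> R)
    (V1 V2 : {set T}) (E1 E2 : {set {set T}}) (e : {set T}) :
  (0 < d)%N ->
  is_graph V1 E1 -> is_graph V2 E2 ->
  #|V1 :&: V2| = 2%N ->
  E1 :&: E2 = [set e] ->
  generic_on (V1 :|: V2) p ->
  ~ is_coloop (rig_circuit p E1) e ->
  ~ is_coloop (rig_circuit p E2) e ->
  (forall C, rig_circuit p (E1 :|: E2) C <->
     parallel_connection_circuits (rig_circuit p E1) (rig_circuit p E2) e C) /\
  (forall C, rig_circuit p ((E1 :|: E2) :\ e) C <->
     two_sum_circuits (rig_circuit p E1) (rig_circuit p E2) e C).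
Proof.
move=> d_gt0 g1 g2 V12_card E12 gen _ _; rewrite !rig_circuitE.
have [eV1 e_card] := g1 e (e_in_E1 E12).
have [eV2 _] := g2 e (e_in_E2 E12).
have /cards2P [u [v [uv e_uv]]] : #|e| == 2%N by rewrite e_card.
have V12 : V1 :&: V2 = [set u; v].
  by rewrite -e_uv; apply/esym/eqP; rewrite eqEcard subsetI eV1 eV2 V12_card e_card /=.
have uvV : {subset [set u; v] <= V1 :|: V2}.
  by move=> x; rewrite -V12 !inE => /andP [->].
pose k0 := Ordinal d_gt0.
have puv : p u k0 != p v k0.
  by apply: generic_on_neq gen (uvV _ _) (uvV _ _) uv; rewrite !inE eqxx ?orbT.
have span_cap := rig_span_cap g1 g2 V12 puv.
have re_neq0 : exists x, rig_vec p [set u; v] x != 0.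
  by exists (u, k0); rewrite /rig_vec /= rig_row_edge // subr_eq0.
subst e; split=> C; [exact: circuit_parallel | exact: circuit_two_sum].
Qed.
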